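(* Suppose that a domino, with holes $H_1$, $H_2$ and edge $xy$, is the underlying graph of some oriented graph $G$ derived from a Burling tree $(T,r,\ell,c)$. Then there exist $z\in\{x,y\}$ and $i\in\{1,2\}$ such that $z$ is the pivot of $H_i$ and $z$ is a subordinate vertex of $H_{3-i}$.
   Context: Graphs are finite, without loops or multiple edges; oriented graphs have no pair of opposite arcs. A hole is an induced cycle of length at least $4$. A domino is a graph made of an edge $xy$ and two holes $H_1,H_2$ both containing the edge $xy$, such that $V(H_1)\cap V(H_2)=\{x,y\}$ and there are no edges other than those of $H_1$ and $H_2$. In a rooted tree $T$ with root $r$, each non-root vertex $v$ has a parent $p(v)$; children, leaves, ancestors and descendants are as usual. A branch is a sequence $v_1\dots v_k$ ($k\ge0$) with $v_i$ the parent of $v_{i+1}$; it starts at $v_1$. A Burling tree is a 4-tuple $(T,r,\ell,c)$: $T$ a rooted tree with root $r$; $\ell$ assigns to each non-leaf vertex $v$ one of its children $\ell(v)$ (the last-born of $v$); $c$ assigns to every vertex $v$ that is neither the root nor a last-born the vertex-set of a (possibly empty) branch starting at $\ell(p(v))$, and $c(v)=\emptyset$ if $v$ is the root or a last-born. The oriented graph fully derived from it has vertex-set $V(T)$ and an arc $uv$ iff $v\in c(u)$; an oriented graph is derived from the Burling tree if it is an induced subgraph of the fully derived one. A hole of an oriented graph means a hole of its underlying graph. If $G$ is derived from $T$ and $H$ is a hole of $G$, then (as established in the paper) $H$ with the inherited orientation has exactly two sources, called its antennas, and exactly two sinks; exactly one of these sinks is adjacent to both antennas and is an ancestor in $T$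 of all vertices of $H$ other than the antennas: it is the pivot of $H$. A vertex of $H$ is subordinate if it is neither the pivot nor an antenna of $H$. *)

From mathcomp Require Import all_boot.
Set Implicit Arguments. Unset Strict Implicit. Unset Printing Implicit Defensive.

Section Burling.
Variable T : finType.

Definition rooted_tree (r : T) (par : T -> T) : Prop :=
  par r = r /\ (forall v, v != r -> par v != v) /\
  (forall v, exists k, iter k par v = r).

Definition is_child (r : T) (par : T -> T) (v u : T) : bool :=
  (u != r) && (par u == v).

Definition is_leaf (r : T) (par : T -> T) (v : T) : bool :=
  [forall u, ~~ is_child r par v u].

Definition ancestor (par : T -> T) (u v : T) : Prop :=
  exists k, iter k par v = u.

Definition branch_from (r : T) (par : T -> T) (a : T) (s : seq T) : Prop :=
  match s with
  | [::] => True
  | b :: s' => b = a /\ path (fun u w => is_child r par u w) b s'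
  end.

Definition last_born (r : T) (par l : T -> T) (v : T) : bool :=
  (v != r) && (l (par v) == v).

Definition burling_tree (r : T) (par l : T -> T) (c : T -> {set T}) : Prop :=
  rooted_tree r par /\
  (forall v, ~~ is_leaf r par v -> is_child r par v (l v)) /\
  (forall v, (v == r) || last_born r par l v -> c v = set0) /\
  (forall v, v != r -> ~~ last_born r par l v ->
     exists s, branch_from r par (l (par v)) s /\ c v = [set x in s]).

(* arcs of the oriented graph derived from the Burling tree, induced on S *)
Definition arc (S : {set T}) (c : T -> {set T}) (u v : T) : bool :=
  [&& u \in S, v \in S & v \in c u].

Definition adj (S : {set T}) (c : T -> {set T}) (u v : T) : bool :=
  arc S c u v || arc S c v u.

(* H (listed in cyclic order) is a hole of the graph with adjacency e:
   an induced cycle of length at least 4 *)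
Definition hole (e : rel T) (H : seq T) : Prop :=
  uniq H /\ 4 <= size H /\
  {in H &, forall a b, e a b = (b == next H a) || (a == next H b)}.

Definition domino (S : {set T}) (e : rel T) (H1 H2 : seq T) (x y : T) : Prop :=
  hole e H1 /\ hole e H2 /\
  x != y /\ e x y /\
  (forall v, v \in H1 -> v \in H2 -> (v == x) || (v == y)) /\
  x \in H1 /\ y \in H1 /\ x \in H2 /\ y \in H2 /\
  S = [set v | (v \in H1) || (v \in H2)] /\
  (forall a b, a \in S -> b \in S -> e a b ->
     ((a \in H1) && (b \in H1)) || ((a \in H2) && (b \in H2))).

Definition antenna (S : {set T}) (c : T -> {set T}) (H : seq T) (v : T) : bool :=
  (v \in H) && [forall w, (w \in H) ==> ~~ arc S c w v].

Definition sink (S : {set T}) (c : T -> {set T}) (H : seq T) (v : T) : bool :=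
  (v \in H) && [forall w, (w \in H) ==> ~~ arc S c v w].

Definition pivot (par : T -> T) (S : {set T}) (c : T -> {set T})
    (H : seq T) (z : T) : Prop :=
  sink S c H z /\
  (forall a, antenna S c H a -> adj S c z a) /\
  (forall w, w \in H -> ~~ antenna S c H w -> ancestor par z w).

Definition subordinate (par : T -> T) (S : {set T}) (c : T -> {set T})
    (H : seq T) (v : T) : Prop :=
  v \in H /\ ~ pivot par S c H v /\ ~~ antenna S c H v.

End Burling.

From Pilot Require Import Defs.
From mathcomp Require Import all_boot.
From Stdlib Require Import Classical.
Set Implicit Arguments. Unset Strict Implicit. Unset Printing Implicit Defensive.

(* An arc u -> v of a Burling tree goes from u to a descendant of the last-born
   sibling of u.  Hence the ends of an edge are incomparable, and if t is an
   ancestor of one end u of an edge uw but not of the other end w, then w -> t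
   (unless u = t).  So "t is an ancestor of z" is constant along any path that
   avoids t and sends no arc into t.
   In a hole this gives: a vertex t with a proper descendant in the hole is an
   ancestor of every vertex except its two neighbours, which are antennas
   pointing at t; such a t is unique, it is the pivot, and every hole has one.
   Orient the domino so that x -> y.  Then y is the pivot of exactly one hole,
   by propagation along H2 minus x: if of neither, the pivots of H1 and H2
   would be ancestors of each other; if of both, the other neighbours x1, x2 of
   the common antenna x are comparable, and x1 <= x2 would give x1 <= y <= x1.
   In the other hole y is not an antenna (x -> y), so it is subordinate. *)

(** * Rooted trees *)

Section RootedTree.
Variables (T : finType) (r : T) (par : T -> T).
Hypothesis tree : rooted_tree r par.
Local Notation anc := (ancestor par).

Lemma anc_refl a : anc a a. Proof. by exists 0. Qed.

Lemma anc_par v : anc (par v) v. Proof. by exists 1. Qed.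

Lemma anc_trans a b d : anc a b -> anc b d -> anc a d.
Proof. by move=> [i <-] [j <-]; exists (i + j); rewrite iterD. Qed.

Lemma anc_to_par a b : anc a b -> a != b -> anc a (par b).
Proof. by case=> [[|k] <-]; rewrite ?eqxx // => _; exists k; rewrite iterSr. Qed.

Lemma anc_total a b v : anc a v -> anc b v -> anc a b \/ anc b a.
Proof.
move=> [i <-] [j <-]; case: (leqP i j) => [le_ij | /ltnW le_ji].
  by right; exists (j - i); rewrite -iterD subnK.
by left; exists (i - j); rewrite -iterD subnK.
Qed.

Lemma anc_root a : anc a r -> a = r.
Proof. by case: tree => par_r _ [k <-]; rewrite iter_fix. Qed.

Lemma root_reachable v : exists k, iter k par v == r.
Proof. by case: tree => _ [_ /(_ v) [k Ek]]; exists k; rewrite Ek. Qed.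

Definition depth v := ex_minn (root_reachable v).

Lemma iter_depth v : iter (depth v) par v = r.
Proof. by rewrite /depth; case: ex_minnP => m /eqP. Qed.

Lemma depth_min v k : iter k par v = r -> depth v <= k.
Proof. by rewrite /depth; case: ex_minnP => m _ min_m /eqP /min_m. Qed.

Lemma depth_par v : v != r -> depth (par v) < depth v.
Proof.
move=> vr; have := iter_depth v; case Ed: (depth v) => [|d] /=.
  by move=> Evr; rewrite Evr eqxx in vr.
by rewrite -iterS iterSr => /depth_min.
Qed.

Lemma anc_depth_le a b : anc a b -> depth a <= depth b.
Proof.
case=> k <-; elim: k b => // k IHk b; rewrite iterSr.
apply: (leq_trans (IHk _)); have [-> | br] := eqVneq b r.
  by case: tree => ->.
exact/ltnW/depth_par.
Qed.

Lemma anc_depth_lt a b : anc a b -> a != b -> depth a < depth b.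
Proof.
move=> ab neq_ab; have br : b != r.
  by apply: contra_neq neq_ab => Eb; move: ab; rewrite Eb => /anc_root ->.
exact: leq_ltn_trans (anc_depth_le (anc_to_par ab neq_ab)) (depth_par br).
Qed.

Lemma anc_anti a b : anc a b -> anc b a -> a = b.
Proof.
move=> ab ba; apply/eqP; apply: contraT => neq_ab.
have := leq_trans (anc_depth_lt ab neq_ab) (anc_depth_le ba).
by rewrite ltnn.
Qed.

Lemma sibling_not_anc a b : par a = par b -> a != b -> a != r -> ~ anc a b.
Proof.
move=> Epar neq_ab ar ab; move: (anc_to_par ab neq_ab); rewrite -Epar => a_par.
have Ea := anc_anti a_par (anc_par a).
by case: tree => _ [/(_ a ar)]; rewrite -Ea eqxx.
Qed.

Lemma child_path_interval a t x : path (is_child r par) a t ->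
  x \in a :: t <-> anc a x /\ anc x (last a t).
Proof.
elim: t a x => [|b t IHt] a x /=.
  rewrite inE; split=> [/eqP -> | [ax xa]]; first by split; apply: anc_refl.
  by rewrite (anc_anti ax xa).
case/andP=> /andP [_ /eqP Eb] /IHt IHb; rewrite inE.
have a_b : anc a b by rewrite -Eb; apply: anc_par.
have [b_m _] : anc b (last b t) /\ _ := proj1 (IHb _) (mem_last b t).
split=> [/orP [/eqP -> | /IHb [bx xm]] | [ax xm]].
- by split; [apply: anc_refl | apply: anc_trans a_b b_m].
- by split=> //; apply: anc_trans a_b bx.
have [// | neq_xa] := eqVneq x a; apply/orP; right; apply/IHb; split=> //.
have [// | xb] := anc_total b_m xm.
have [-> | neq_xb] := eqVneq x b; first exact: anc_refl.
by move: (anc_to_par xb neq_xb); rewrite Eb => /(anc_anti ax) Exa; rewrite Exa eqxx in neq_xa.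
Qed.

Lemma branch_interval a s : branch_from r par a s -> s != [::] ->
  exists m, forall x, x \in s <-> anc a x /\ anc x m.
Proof.
by case: s => // b t [-> pt] _; exists (last a t) => x; apply: child_path_interval.
Qed.

End RootedTree.

(** * Holes *)

Lemma mem_uniq_behead (T : eqType) (x z : T) s :
  uniq (x :: s) -> (z \in s) = (z \in x :: s) && (z != x).
Proof. by move=> U; have := mem_rem_uniq x U z; rewrite /= eqxx andbC. Qed.

Section Holes.
Variables (T : finType) (e : rel T) (H : seq T).
Hypothesis hole_H : hole e H.

Lemma hole_uniq : uniq H. Proof. by case: hole_H. Qed.

Lemma next_eq_prev a b : (b == next H a) = (a == prev H b).
Proof.
have U := hole_uniq.
by apply/eqP/eqP => [-> | ->]; rewrite ?(prev_next U) ?(next_prev U).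
Qed.

Lemma hole_adjE a b : a \in H -> b \in H -> e a b = (b == next H a) || (b == prev H a).
Proof. by move=> aH bH; case: hole_H => _ [_ ->] //; rewrite (next_eq_prev b a). Qed.

Lemma hole_next_adj a : a \in H -> e a (next H a).
Proof. by move=> aH; rewrite hole_adjE ?mem_next ?eqxx. Qed.

Lemma hole_prev_adj a : a \in H -> e (prev H a) a.
Proof. by move=> aH; rewrite -{2}(next_prev hole_uniq a) hole_next_adj ?mem_prev. Qed.

Lemma hole_adjP a b : a \in H -> b \in H -> e a b -> b = next H a \/ b = prev H a.
Proof. by move=> aH bH; rewrite hole_adjE // => /orP [] /eqP; [left | right]. Qed.

Lemma hole_split t : t \in H -> exists c s,
  [/\ H =i [:: t, next H t, prev H t, c & s], uniq [:: t, next H t, prev H t, c & s]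
    & path (frel (next H)) (next H t) (c :: rcons s (prev H t))].
Proof.
case/rot_to=> i s' Erot; have U := hole_uniq.
have Enext : frel (next (rot i H)) =2 frel (next H) by move=> a b; rewrite /= next_rot.
have := @cycle_next _ (rot i H); rewrite rot_uniq (eq_cycle Enext) Erot => /(_ U).
have : 3 <= size s' by case: hole_H => _ [+ _]; rewrite -(size_rot i) Erot.
have Urot : uniq (t :: s') by rewrite -Erot rot_uniq.
have memH : H =i t :: s' by move=> z; rewrite -Erot mem_rot.
clear Erot; case: s' Urot memH => [|n [|c s]] // Urot memH.
case/lastP: s Urot memH => [|s p] // Urot memH _.
rewrite /= rcons_path last_rcons => /and3P [/eqP nt /eqP nn /andP [pcs /eqP np]].
have pt : prev H t = p by rewrite -np prev_next.
have perm_rot : perm_eq [:: t, n & rcons (c :: s) p] [:: t, n, p, c & s].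
  by rewrite !perm_cons perm_rcons.
exists c, s; rewrite nt pt; split.
- by move=> z; rewrite memH -(perm_mem perm_rot).
- by rewrite (perm_uniq perm_rot) in Urot.
- by rewrite /= nn eqxx.
Qed.

Lemma hole_nbrs_neq a : a \in H ->
  [/\ next H a != a, prev H a != a, next H a != prev H a,
      next H (next H a) != a & next H (next H a) != prev H a].
Proof.
case/hole_split=> c [s [_ U /andP [/eqP -> _]]]; move: U.
rewrite /= !inE !negb_or => /and5P [/and4P [an ap ac _] /and3P [np _ _] /andP [pc _] _ _].
by split; rewrite // eq_sym.
Qed.

Lemma hole_next_path a s : a \in H -> path (frel (next H)) a s -> path e a s.
Proof.
elim: s a => //= b s IHs a aH /andP [/eqP <- pbs].
by rewrite hole_next_adj // IHs ?mem_next.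
Qed.

Lemma hole_minus_path v : v \in H ->
  exists a s, path e a s /\ forall z, (z \in a :: s) = (z \in H) && (z != v).
Proof.
move=> vH; have [c [s [memH U pth]]] := hole_split vH.
exists (next H v), (c :: rcons s (prev H v)); split.
  by apply: hole_next_path pth; rewrite mem_next.
move=> z; rewrite memH -(mem_uniq_behead _ U).
by rewrite !inE mem_rcons inE; congr (_ || _); apply: orbCA.
Qed.

Lemma hole_interior_path t : t \in H -> exists a s, path e a s /\
  forall z, (z \in a :: s) = [&& z \in H, z != t, z != next H t & z != prev H t].
Proof.
move=> tH; have [c [s [memH U pth]]] := hole_split tH.
have cH : c \in H by rewrite memH !inE eqxx !orbT.
exists c, s; split.
  by apply: hole_next_path cH _; move: pth; rewrite /= rcons_path => /and3P [].
move=> z; case/andP: (U) => _ U2; case/andP: (U2) => _ U3.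
by rewrite (mem_uniq_behead _ U3) (mem_uniq_behead _ U2) (mem_uniq_behead _ U) -memH -!andbA.
Qed.

Lemma hole_rev : hole e (rev H).
Proof.
have U := hole_uniq; split; first by rewrite rev_uniq.
split; first by rewrite size_rev; case: hole_H => _ [].
by move=> a b; rewrite !mem_rev => aH bH; rewrite hole_adjE // !next_rev // next_eq_prev orbC.
Qed.

Lemma hole_orient a b : a \in H -> b \in H -> e a b ->
  exists H', [/\ hole e H', H' =i H & next H' a = b].
Proof.
move=> aH bH /(hole_adjP aH bH) [-> | ->]; first by exists H.
by exists (rev H); split; [exact: hole_rev | exact: mem_rev | rewrite next_rev ?hole_uniq].
Qed.
End Holes.

(** * Arcs of a Burling tree *)

Section Burling.
Variables (T : finType) (r : T) (par l : T -> T) (c : T -> {set T}) (S : {set T}).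
Hypothesis burling : burling_tree r par l c.
Local Notation anc := (ancestor par).
Local Notation ar := (Defs.arc S c).
Local Notation e := (adj S c).

Let tree : rooted_tree r par. Proof. by case: burling. Qed.

Lemma arc_spec u v : ar u v ->
  [/\ u != r, l (par u) != u, par (l (par u)) = par u, l (par u) != r &
      exists m, forall x, x \in c u <-> anc (l (par u)) x /\ anc x m].
Proof.
case/and3P=> _ _ v_cu; case: burling => _ [lastborn_child [c_set0 c_branch]].
have : ~~ ((u == r) || last_born r par l u).
  by apply: contraL v_cu => /c_set0 ->; rewrite inE.
rewrite negb_or => /andP [ur not_lb]; have [s [br_s Ecu]] := c_branch u ur not_lb.
have : ~~ is_leaf r par (par u) by apply/forallPn; exists u; rewrite negbK /is_child ur /=.
move/lastborn_child => /andP [lr /eqP par_l]; split=> //.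
  by apply: contra not_lb => /eqP lu; rewrite /last_born ur lu /=.
have : s != [::] by apply: contraTneq v_cu => Es; rewrite Ecu Es inE.
case/(branch_interval tree br_s) => m Es.
by exists m => x; rewrite Ecu inE.
Qed.

Lemma arc_anc_lastborn u v : ar u v -> anc (l (par u)) v.
Proof.
move=> uv; have [_ _ _ _ [m Em]] := arc_spec uv.
by case/and3P: uv => _ _ /Em [].
Qed.

Lemma arc_out_total u v w : ar u v -> ar u w -> anc v w \/ anc w v.
Proof.
move=> uv /and3P [_ _ /[dup] w_cu]; have [_ _ _ _ [m Em]] := arc_spec uv.
by case/and3P: uv => _ _ /Em [_ vm] /Em [_ wm]; apply: anc_total vm wm.
Qed.

Lemma arc_convex u v t : ar u v -> t \in S -> anc (l (par u)) t -> anc t v -> ar u t.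
Proof.
move=> uv tS lt tv; have [_ _ _ _ [m Em]] := arc_spec uv.
case/and3P: uv => uS _ /Em [_ vm]; rewrite /Defs.arc uS tS /=.
by apply/Em; split=> //; apply: anc_trans tv vm.
Qed.

Lemma arc_incomparable u v : ar u v -> ~ anc u v /\ ~ anc v u.
Proof.
move=> uv; have [ur lu par_l lr _] := arc_spec uv; have lv := arc_anc_lastborn uv.
have not_ul : ~ anc u (l (par u)) by apply: (sibling_not_anc tree (esym par_l)); rewrite // eq_sym.
have not_lu := sibling_not_anc tree par_l lu lr.
split=> [u_v | v_u]; last exact/not_lu/(anc_trans lv v_u).
by case: (anc_total u_v lv).
Qed.

Lemma arc_neq u v : ar u v -> u != v.
Proof. by move=> /arc_incomparable [uv _]; apply: contra_not_neq uv => ->; apply: anc_refl. Qed.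

Lemma arc_par_anc u v : ar u v -> anc (par u) v.
Proof.
move=> uv; have [_ _ par_l _ _] := arc_spec uv.
by rewrite -par_l; apply: anc_trans (anc_par par (l (par u))) (arc_anc_lastborn uv).
Qed.

Lemma arc_par_par u v : ar u v -> anc (par u) (par v).
Proof.
move=> uv; apply: anc_to_par (arc_par_anc uv) _.
by have [_ not_vu] := arc_incomparable uv; apply: contra_not_neq not_vu => <-; apply: anc_par.
Qed.

(* Otherwise v, a descendant of its sibling l (par u), would be this last-born
   itself, which has no out-arcs. *)
Lemma arc2_par_neq u v w : ar u v -> ar v w -> par v != par u.
Proof.
move=> uv vw; apply/eqP => Epar; have [_ lu par_l lr _] := arc_spec uv.
have [_ lv _ _ _] := arc_spec vw; rewrite Epar in lv.
by apply: (sibling_not_anc tree _ lv lr (arc_anc_lastborn uv)); rewrite par_l.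
Qed.

Lemma arc_asym u v : ar u v -> ~~ ar v u.
Proof.
move=> uv; apply/negP => vu; have := arc2_par_neq uv vu.
by rewrite (anc_anti tree (arc_par_par uv) (arc_par_par vu)) eqxx.
Qed.

Lemma arc2_depth_lt u v w : ar u v -> ar v w -> depth tree (par u) < depth tree (par v).
Proof.
move=> uv vw; apply: anc_depth_lt (arc_par_par uv) _.
by rewrite eq_sym (arc2_par_neq uv vw).
Qed.

Lemma adjC u v : e u v = e v u. Proof. by rewrite /adj orbC. Qed.

Lemma adj_incomparable u v : e u v -> ~ anc u v /\ ~ anc v u.
Proof. by case/orP=> /arc_incomparable [] //. Qed.

Lemma arc_cross t u w : t \in S -> e u w -> anc t u -> ~ anc t w ->
  u = t \/ ar w t /\ ar w u.
Proof.
move=> tS /orP [uw | wu] tu not_tw.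
  have [-> | neq_ut] := eqVneq u t; [by left | exfalso; apply: not_tw].
  by apply: anc_trans (anc_to_par tu _) (arc_par_anc uw); rewrite eq_sym.
right; split=> //; have [lt | tl] := anc_total (arc_anc_lastborn wu) tu.
  exact: arc_convex wu tS lt tu.
have [Et | neq_tl] := eqVneq t (l (par w)).
  by apply: arc_convex wu tS _ tu; rewrite -Et; apply: anc_refl.
have [_ _ par_l _ _] := arc_spec wu; exfalso; apply: not_tw.
by move: (anc_to_par tl neq_tl); rewrite par_l => /anc_trans; apply; apply: anc_par.
Qed.

Lemma anc_across_adj t u w : t \in S -> e u w -> u != t -> ~~ ar w t ->
  anc t u -> anc t w.
Proof.
move=> tS uw neq_ut not_wt tu; apply: NNPP => not_tw.
by case: (arc_cross tS uw tu not_tw) => [/eqP | []]; rewrite ?(negbTE neq_ut) ?(negbTE not_wt).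
Qed.

Lemma anc_along_path t a s : t \in S -> path e a s ->
  (forall z, z \in a :: s -> z != t /\ ~~ ar z t) ->
  forall z, z \in a :: s -> anc t z <-> anc t a.
Proof.
move=> tS; elim: s a => [|b s IHs] a /=.
  by move=> _ _ z; rewrite inE => /eqP ->.
case/andP=> ab /IHs IHb not_to_t z; rewrite inE => /orP [/eqP -> // | zb].
have [neq_at not_at] := not_to_t a (mem_head _ _).
have [neq_bt not_bt] : b != t /\ ~~ ar b t by apply: not_to_t; rewrite !inE eqxx orbT.
rewrite (IHb _ z zb); last by move=> y yb; apply: not_to_t; rewrite inE yb orbT.
split; first by apply: anc_across_adj tS _ neq_bt not_at; rewrite adjC.
exact: anc_across_adj tS ab neq_at not_bt.
Qed.

Lemma adj_mem u v : e u v -> u \in S /\ v \in S.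
Proof. by case/orP=> /and3P []. Qed.

Lemma hole_mem_S H a : hole e H -> a \in H -> a \in S.
Proof. by move=> hH aH; case: (adj_mem (hole_next_adj hH aH)). Qed.

Lemma antennaP H v : reflect (v \in H /\ forall z, z \in H -> ~~ ar z v) (antenna S c H v).
Proof. by apply: (iffP andP) => [] [vH /forall_inP]. Qed.

Lemma sinkP H v : reflect (v \in H /\ forall z, z \in H -> ~~ ar v z) (sink S c H v).
Proof. by apply: (iffP andP) => [] [vH /forall_inP]. Qed.

Lemma eq_antenna H H' v : H =i H' -> antenna S c H v = antenna S c H' v.
Proof. by move=> EH; rewrite /antenna EH; congr (_ && _); apply: eq_forallb => w; rewrite EH. Qed.

Lemma eq_sink H H' v : H =i H' -> sink S c H v = sink S c H' v.
Proof. by move=> EH; rewrite /sink EH; congr (_ && _); apply: eq_forallb => w; rewrite EH. Qed.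

Lemma hole_nbrs_not_anc H t : hole e H -> t \in H ->
  ~ anc t (next H t) /\ ~ anc t (prev H t).
Proof.
move=> hH tH; split.
  by case: (adj_incomparable (hole_next_adj hH tH)).
by case: (adj_incomparable (hole_prev_adj hH tH)).
Qed.

(** * Pivots *)

Definition has_desc (H : seq T) (t : T) : Prop :=
  exists w, [/\ w \in H, w != t & anc t w].

Lemma eq_has_desc H H' t : H =i H' -> has_desc H t -> has_desc H' t.
Proof. by move=> EH [w [wH neq_wt tw]]; exists w; rewrite -EH. Qed.

Lemma has_desc_anc H t : hole e H -> t \in H -> has_desc H t ->
  forall z, z \in H -> z != next H t -> z != prev H t -> anc t z.
Proof.
move=> hH tH [w [wH neq_wt tw]] z zH zn zp.
have [-> | neq_zt] := eqVneq z t; first exact: anc_refl.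
have [a [s [pth mem_as]]] := hole_interior_path hH tH.
have [not_tn not_tp] := hole_nbrs_not_anc hH tH.
have not_into_t y : y \in a :: s -> y != t /\ ~~ ar y t.
  rewrite mem_as => /and4P [yH yt yn yp]; split=> //; apply/negP => yt'.
  have : e t y by rewrite /adj yt' orbT.
  by case/(hole_adjP hH tH yH) => /eqP; rewrite ?(negbTE yn) ?(negbTE yp).
have wn : w != next H t by apply: contra_not_neq not_tn => <-.
have wp : w != prev H t by apply: contra_not_neq not_tp => <-.
have spread := anc_along_path (hole_mem_S hH tH) pth not_into_t.
have z_in : z \in a :: s by rewrite mem_as zH neq_zt zn zp.
have w_in : w \in a :: s by rewrite mem_as wH neq_wt wn wp.
by apply/(spread z z_in); apply/(spread w w_in).
Qed.

Lemma has_desc_next H t : hole e H -> t \in H -> has_desc H t ->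
  ar (next H t) t /\ antenna S c H (next H t).
Proof.
move=> hH tH desc_t; set n := next H t; set m := next H n.
have nH : n \in H by rewrite mem_next.
have mH : m \in H by rewrite mem_next.
have [_ _ _ mt mp] := hole_nbrs_neq hH tH.
have [mn _ _ _ _] := hole_nbrs_neq hH nH.
have tm := has_desc_anc hH tH desc_t mH mn mp.
have [not_tn _] := hole_nbrs_not_anc hH tH.
have mn_adj : e m n by rewrite adjC hole_next_adj.
case: (arc_cross (hole_mem_S hH tH) mn_adj tm not_tn) => [/eqP | [nt_arc nm_arc]].
  by rewrite (negbTE mt).
split=> //; apply/antennaP; split=> // z zH; apply/negP => zn.
have pn : prev H n = t := prev_next (hole_uniq hH) t.
have : e n z by rewrite /adj zn orbT.
case/(hole_adjP hH nH zH) => Ez; first by move: (arc_asym nm_arc); rewrite /m -Ez zn.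
by move: (arc_asym nt_arc); rewrite -pn -Ez zn.
Qed.

Lemma has_desc_prev H t : hole e H -> t \in H -> has_desc H t ->
  ar (prev H t) t /\ antenna S c H (prev H t).
Proof.
move=> hH tH desc_t; have U := hole_uniq hH.
have memR : rev H =i H by move=> z; rewrite mem_rev.
have := has_desc_next (hole_rev hH) _ (eq_has_desc (fun z => esym (memR z)) desc_t).
by rewrite memR next_rev // (eq_antenna _ memR) => /(_ tH).
Qed.

Lemma has_desc_sink H t : hole e H -> t \in H -> has_desc H t -> sink S c H t.
Proof.
move=> hH tH desc_t; apply/sinkP; split=> // z zH; apply/negP => tz.
have [[nt _] [pt _]] := (has_desc_next hH tH desc_t, has_desc_prev hH tH desc_t).
have : e t z by rewrite /adj tz.
by case/(hole_adjP hH tH zH) => Ez; [move: (arc_asym nt) | move: (arc_asym pt)]; rewrite -Ez tz.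
Qed.

Lemma has_desc_unique H t u : hole e H -> t \in H -> u \in H ->
  has_desc H t -> has_desc H u -> t = u.
Proof.
have below a b : hole e H -> a \in H -> b \in H -> has_desc H a -> has_desc H b -> anc a b.
  move=> hH aH bH desc_a desc_b; apply: (has_desc_anc hH aH desc_a bH).
  - apply: contraTneq (has_desc_sink hH bH desc_b) => Eb; apply/sinkP => -[_ /(_ a aH)].
    by rewrite Eb (proj1 (has_desc_next hH aH desc_a)).
  - apply: contraTneq (has_desc_sink hH bH desc_b) => Eb; apply/sinkP => -[_ /(_ a aH)].
    by rewrite Eb (proj1 (has_desc_prev hH aH desc_a)).
move=> hH tH uH dt du.
exact: (anc_anti tree (below t u hH tH uH dt du) (below u t hH uH tH du dt)).
Qed.

Lemma not_antenna H v : v \in H -> ~~ antenna S c H v -> exists2 z, z \in H & ar z v.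
Proof. by rewrite /antenna => -> /forall_inPn [z zH /negPn]; exists z. Qed.

Lemma antenna_out_arcs H a : hole e H -> antenna S c H a ->
  ar a (next H a) /\ ar a (prev H a).
Proof.
move=> hH /antennaP [aH no_in].
have [nH pH] : next H a \in H /\ prev H a \in H by rewrite mem_next mem_prev.
move: (hole_next_adj hH aH) (hole_prev_adj hH aH).
by rewrite /adj (negbTE (no_in _ nH)) (negbTE (no_in _ pH)) orbF => -> .
Qed.

Lemma antenna_nbr_has_desc H a : hole e H -> antenna S c H a ->
  has_desc H (next H a) \/ has_desc H (prev H a).
Proof.
move=> hH ant_a; have [aH _] := elimT (antennaP H a) ant_a.
have [an ap] := antenna_out_arcs hH ant_a; have [_ _ np _ _] := hole_nbrs_neq hH aH.
case: (arc_out_total an ap) => [n_p | p_n]; [left; exists (prev H a) | right; exists (next H a)].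
  by rewrite mem_prev eq_sym.
by rewrite mem_next.
Qed.

Lemma has_desc_pivot H t : hole e H -> t \in H -> has_desc H t -> pivot par S c H t.
Proof.
move=> hH tH desc_t; split; first exact: has_desc_sink.
have [[_ ant_n] [_ ant_p]] := (has_desc_next hH tH desc_t, has_desc_prev hH tH desc_t).
split=> [a ant_a | z zH not_ant_z].
  have [aH _] := elimT (antennaP H a) ant_a.
  case: (antenna_nbr_has_desc hH ant_a) => [desc_n | desc_p].
    rewrite -(has_desc_unique hH _ tH desc_n desc_t) ?mem_next // adjC.
    exact: hole_next_adj.
  rewrite -(has_desc_unique hH _ tH desc_p desc_t) ?mem_prev //.
  exact: hole_prev_adj.
apply: (has_desc_anc hH tH desc_t zH).
  by apply: contraNneq not_ant_z => ->.
by apply: contraNneq not_ant_z => ->.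
Qed.

Lemma pivot_has_desc H t : hole e H -> pivot par S c H t -> has_desc H t.
Proof.
move=> hH [sink_t [_ below]]; have [tH _] := elimT (sinkP H t) sink_t.
have [nt _ _ mt _] := hole_nbrs_neq hH tH.
have nH : next H t \in H by rewrite mem_next.
have mH : next H (next H t) \in H by rewrite mem_next.
case/orP: (hole_next_adj hH nH) => [n_m | m_n]; [exists (next H (next H t)) | exists (next H t)].
  by split=> //; apply: below => //; apply/antennaP => -[_ /(_ _ nH)]; rewrite n_m.
by split=> //; apply: below => //; apply/antennaP => -[_ /(_ _ mH)]; rewrite m_n.
Qed.

Lemma pivotE H t : hole e H -> pivot par S c H t <-> t \in H /\ has_desc H t.
Proof.
move=> hH; split=> [piv_t | [tH /(has_desc_pivot hH tH) //]].
by split; [case: piv_t => /sinkP [] | apply: pivot_has_desc].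
Qed.

Lemma hole_antenna H : hole e H -> exists a, antenna S c H a.
Proof.
move=> hH; have [h0 h0H] : exists h0, h0 \in H.
  by case: hH => _ [+ _]; case: H => // h0 H' _; exists h0; rewrite inE eqxx.
have [v vH v_min] := arg_minnP (fun v => depth tree (par v)) h0H.
have [ant_v | /(not_antenna vH) [u uH uv]] := boolP (antenna S c H v); first by exists v.
exists u; apply/antennaP; split=> // w wH; apply/negP => wu.
have := leq_ltn_trans (v_min w wH) (arc2_depth_lt wu uv).
by rewrite ltnNge (anc_depth_le tree (arc_par_par uv)).
Qed.

Lemma hole_has_desc H : hole e H -> exists2 t, t \in H & has_desc H t.
Proof.
move=> hH; have [a ant_a] := hole_antenna hH; have [aH _] := elimT (antennaP H a) ant_a.
case: (antenna_nbr_has_desc hH ant_a) => ?; [exists (next H a) | exists (prev H a)];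
  by rewrite ?mem_next ?mem_prev.
Qed.

(** * Dominoes *)

Record oriented_domino (H1 H2 : seq T) (x y : T) : Prop := OrientedDomino {
  odom_hole1 : hole e H1;
  odom_hole2 : hole e H2;
  odom_arc : ar x y;
  odom_next1 : next H1 x = y;
  odom_next2 : next H2 x = y;
  odom_mem1 : x \in H1;
  odom_mem2 : x \in H2;
  odom_meet : forall v, v \in H1 -> v \in H2 -> (v == x) || (v == y);
  odom_edges : forall a b, a \in S -> b \in S -> e a b ->
    ((a \in H1) && (b \in H1)) || ((a \in H2) && (b \in H2))
}.

Lemma odom_sym H1 H2 x y :
  oriented_domino H1 H2 x y -> oriented_domino H2 H1 x y.
Proof.
case=> h1 h2 xy n1 n2 x1 x2 meet edges; split=> // [v v2 v1 | a b aS bS ab].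
  exact: meet.
by rewrite orbC edges.
Qed.

Section OrientedDomino.
Variables (H1 H2 : seq T) (x y : T).
Hypothesis D : oriented_domino H1 H2 x y.

Let hole1 := odom_hole1 D.
Let hole2 := odom_hole2 D.
Let xH1 := odom_mem1 D.
Let xH2 := odom_mem2 D.
Let yH1 : y \in H1. Proof. by rewrite -(odom_next1 D) mem_next xH1. Qed.
Let yH2 : y \in H2. Proof. by rewrite -(odom_next2 D) mem_next xH2. Qed.
Let prev1y : prev H1 y = x.
Proof. by rewrite -(odom_next1 D) (prev_next (hole_uniq hole1)). Qed.

Lemma odom_cross a b : a \in H1 -> a \notin H2 -> b \in H2 -> e b a -> (b == x) || (b == y).
Proof.
move=> aH1 aH2 bH2 ba; have [bS aS] := adj_mem ba.
move: (odom_edges D bS aS ba); rewrite (negbTE aH2) andbF orbF => /andP [bH1 _].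
exact: (odom_meet D bH1 bH2).
Qed.

Lemma odom_spread t : t \in H1 -> t \notin H2 -> ~~ e y t ->
  forall z1 z2, z1 \in H2 -> z2 \in H2 -> z1 != x -> z2 != x -> anc t z1 -> anc t z2.
Proof.
move=> tH1 tH2 not_yt z1 z2 z1H z2H z1x z2x tz1.
have [a [s [pth mem_as]]] := hole_minus_path hole2 xH2.
have not_into_t z : z \in a :: s -> z != t /\ ~~ ar z t.
  rewrite mem_as => /andP [zH zx]; split; first by apply: contraNneq tH2 => <-.
  apply/negP => zt; have /(odom_cross tH1 tH2 zH) : e z t by rewrite /adj zt.
  by rewrite (negbTE zx) /= => /eqP Ez; rewrite -Ez /adj zt in not_yt.
have spread := anc_along_path (hole_mem_S hole1 tH1) pth not_into_t.
have z1_in : z1 \in a :: s by rewrite mem_as z1H z1x.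
have z2_in : z2 \in a :: s by rewrite mem_as z2H z2x.
by apply/(spread z2 z2_in); apply/(spread z1 z1_in).
Qed.

Lemma odom_prev_notin : prev H1 x \notin H2.
Proof.
have [_ px np _ _] := hole_nbrs_neq hole1 xH1; have pH1 : prev H1 x \in H1 by rewrite mem_prev.
apply/negP => /(odom_meet D pH1); rewrite -(odom_next1 D).
by rewrite (negbTE px) eq_sym (negbTE np).
Qed.

Lemma odom_desc_y_arc : has_desc H1 y -> ar x (prev H1 x).
Proof.
move=> desc_y; have [_ ant_x] := has_desc_prev hole1 yH1 desc_y.
by rewrite prev1y in ant_x; case: (antenna_out_arcs hole1 ant_x).
Qed.

Lemma odom_desc_y_not_below : has_desc H1 y ->
  forall w, w \in H2 -> w != x -> ~ anc (prev H1 x) w.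
Proof.
move=> desc_y w wH2 wx x1w; set x1 := prev H1 x.
have x1H1 : x1 \in H1 by rewrite mem_prev.
have xx1 := odom_desc_y_arc desc_y.
have x1_ny : x1 != next H1 y.
  apply: contraTneq (proj2 (has_desc_next hole1 yH1 desc_y)) => <-.
  by apply/antennaP => -[_ /(_ x xH1)]; rewrite xx1.
have x1_py : x1 != prev H1 y by rewrite prev1y eq_sym arc_neq.
have y_x1 := has_desc_anc hole1 yH1 desc_y x1H1 x1_ny x1_py.
have not_adj : ~~ e y x1 by rewrite (hole_adjE hole1) // negb_or x1_ny.
have yx : y != x by rewrite eq_sym arc_neq // (odom_arc D).
have x1y := odom_spread x1H1 odom_prev_notin not_adj wH2 yH2 wx yx x1w.
by move: odom_prev_notin; rewrite -/x1 (anc_anti tree x1y y_x1) yH2.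
Qed.

Let y_not_antenna H : x \in H -> ~~ antenna S c H y.
Proof. by move=> xH; apply/antennaP => -[_ /(_ x xH)]; rewrite (odom_arc D). Qed.

Lemma odom_no_desc_y_below : ~ has_desc H1 y ->
  exists t, [/\ t \in H1, t \notin H2 & forall z, z \in H2 -> z != x -> anc t z].
Proof.
move=> no_desc_y; have [t tH1 desc_t] := hole_has_desc hole1.
have ty : t != y by apply: contra_not_neq no_desc_y => <-.
have tx : t != x.
  apply: contraTneq (has_desc_sink hole1 tH1 desc_t) => ->.
  by apply/sinkP => -[_ /(_ y yH1)]; rewrite (odom_arc D).
have tH2 : t \notin H2 by apply/negP => /(odom_meet D tH1); rewrite (negbTE tx) (negbTE ty).
have [[_ ant_n] [_ ant_p]] := (has_desc_next hole1 tH1 desc_t, has_desc_prev hole1 tH1 desc_t).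
have yn : y != next H1 t by apply: contraTneq ant_n => <-; apply: y_not_antenna.
have yp : y != prev H1 t by apply: contraTneq ant_p => <-; apply: y_not_antenna.
have not_adj : ~~ e y t by rewrite adjC (hole_adjE hole1) // negb_or yn.
have yx : y != x by rewrite eq_sym arc_neq // (odom_arc D).
exists t; split=> // z zH2 zx.
exact: odom_spread tH1 tH2 not_adj _ _ yH2 zH2 yx zx (has_desc_anc hole1 tH1 desc_t yH1 yn yp).
Qed.

Lemma odom_desc_y_pivot_subordinate : has_desc H1 y -> ~ has_desc H2 y ->
  pivot par S c H1 y /\ subordinate par S c H2 y.
Proof.
move=> desc1 no_desc2; split; first exact: has_desc_pivot.
by split=> //; split; [move/(pivotE _ hole2) => [] | apply: y_not_antenna].
Qed.

End OrientedDomino.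

Lemma odom_has_desc_y H1 H2 x y : oriented_domino H1 H2 x y ->
  has_desc H1 y \/ has_desc H2 y.
Proof.
move=> D; apply: NNPP => /not_or_and [no_desc1 no_desc2].
have [t1 [t1H1 t1H2 below1]] := odom_no_desc_y_below D no_desc1.
have [t2 [t2H2 t2H1 below2]] := odom_no_desc_y_below (odom_sym D) no_desc2.
have t2x : t2 != x by apply: contraNneq t2H1 => ->; apply: odom_mem1 D.
have t1x : t1 != x by apply: contraNneq t1H2 => ->; apply: odom_mem2 D.
have t1t2 := below1 t2 t2H2 t2x.
have t2t1 := below2 t1 t1H1 t1x.
by move: t1H2; rewrite (anc_anti tree t1t2 t2t1) t2H2.
Qed.

Lemma odom_has_desc_y_excl H1 H2 x y : oriented_domino H1 H2 x y ->
  has_desc H1 y -> ~ has_desc H2 y.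
Proof.
move=> D desc1 desc2; have D' := odom_sym D.
have prev_in H : hole e H -> x \in H -> prev H x \in H /\ prev H x != x.
  by move=> hH xH; rewrite mem_prev; case: (hole_nbrs_neq hH xH).
have [p1H1 p1x] := prev_in _ (odom_hole1 D) (odom_mem1 D).
have [p2H2 p2x] := prev_in _ (odom_hole2 D) (odom_mem2 D).
case: (arc_out_total (odom_desc_y_arc D desc1) (odom_desc_y_arc D' desc2)).
  exact: odom_desc_y_not_below D desc1 _ p2H2 p2x.
exact: odom_desc_y_not_below D' desc2 _ p1H1 p1x.
Qed.

Lemma odom_pivot_subordinate H1 H2 x y : oriented_domino H1 H2 x y ->
  (pivot par S c H1 y /\ subordinate par S c H2 y) \/
  (pivot par S c H2 y /\ subordinate par S c H1 y).
Proof.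
move=> D; have D' := odom_sym D.
case: (odom_has_desc_y D) => [desc1 | desc2]; [left | right].
  exact: odom_desc_y_pivot_subordinate D desc1 (odom_has_desc_y_excl D desc1).
exact: odom_desc_y_pivot_subordinate D' desc2 (odom_has_desc_y_excl D' desc2).
Qed.

Lemma eq_pivot H H' z : H =i H' -> pivot par S c H z -> pivot par S c H' z.
Proof.
move=> EH [sink_z [adj_ant below]]; split; first by rewrite -(eq_sink z EH).
split=> [a | w]; first by rewrite -(eq_antenna a EH); apply: adj_ant.
by rewrite -EH -(eq_antenna w EH); apply: below.
Qed.

Lemma eq_subordinate H H' z : H =i H' -> subordinate par S c H z -> subordinate par S c H' z.
Proof.
move=> EH [zH [not_piv not_ant]]; split; first by rewrite -EH.
by split; [move/(eq_pivot (fun u => esym (EH u))) | rewrite -(eq_antenna z EH)].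
Qed.

Lemma domino_swap H1 H2 x y : domino S e H1 H2 x y -> domino S e H1 H2 y x.
Proof.
case=> h1 [h2 [xy [exy [meet [xH1 [yH1 [xH2 [yH2 rest]]]]]]]].
do 2!split=> //; split; first by rewrite eq_sym.
split; first by rewrite adjC.
split; first by move=> v v1 v2; rewrite orbC meet.
by move: rest; tauto.
Qed.

Lemma domino_pivot_subordinate H1 H2 x y : domino S e H1 H2 x y -> ar x y ->
  (pivot par S c H1 y /\ subordinate par S c H2 y) \/
  (pivot par S c H2 y /\ subordinate par S c H1 y).
Proof.
case=> h1 [h2 [_ [exy [meet [xH1 [yH1 [xH2 [yH2 [_ edges]]]]]]]]] xy.
have [H1' [h1' E1 n1]] := hole_orient h1 xH1 yH1 exy.
have [H2' [h2' E2 n2]] := hole_orient h2 xH2 yH2 exy.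
have D : oriented_domino H1' H2' x y.
  split; rewrite ?E1 ?E2 //; first by move=> v; rewrite E1 E2; apply: meet.
  by move=> a b aS bS ab; rewrite !E1 !E2; apply: edges.
case: (odom_pivot_subordinate D) => [[piv sub] | [piv sub]].
  by left; split; [apply: eq_pivot E1 piv | apply: eq_subordinate E2 sub].
by right; split; [apply: eq_pivot E2 piv | apply: eq_subordinate E1 sub].
Qed.

End Burling.

Theorem lemma6p3 (T : finType) (r : T) (par l : T -> T) (c : T -> {set T})
    (S : {set T}) (H1 H2 : seq T) (x y : T) :
  burling_tree r par l c ->
  domino S (adj S c) H1 H2 x y ->
  exists2 z, (z == x) || (z == y) &
    (pivot par S c H1 z /\ subordinate par S c H2 z) \/
    (pivot par S c H2 z /\ subordinate par S c H1 z).
Proof.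
move=> burling dom; have [_ [_ [_ [/orP [xy | yx] _]]]] := dom.
  exists y; first by rewrite eqxx orbT.
  exact: (domino_pivot_subordinate burling dom xy).
exists x; first by rewrite eqxx.
exact: (domino_pivot_subordinate burling (domino_swap dom) yx).
Qed.
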